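(* Let $G$ be a finite group and let $S$ be a partial rainbow on $G$. Then $S$ is a minimal generating set of the transfer system $\langle S\rangle$.
   Context: For a finite group $G$, an arrow is a pair $(K,H)$ of subgroups with $K\leqslant H$; it is an identity arrow if $K=H$. A $G$-transfer system is a set of arrows containing all identity arrows and closed under composition ($(A,B),(B,C)\Rightarrow(A,C)$), conjugation ($(A,B)\Rightarrow(gAg^{-1},gBg^{-1})$ for $g\in G$) and restriction ($(A,B)$ and $L\leqslant B\Rightarrow(A\cap L,L)$). For a set $S$ of non-identity arrows, $\langle S\rangle$ is the smallest transfer system containing $S$; $S$ is a minimal generating set of a transfer system $\mathsf{T}$ if $\langle S\rangle=\mathsf{T}$ and $\langle S\setminus\{s\}\rangle\neq\mathsf{T}$ for all $s\in S$. For a subgroup $K$, $P(K)$ denotes the sum of the exponents in the prime factorization of $|K|$. A rainbow on $\mathbb{N}$ is a finite set of pairs $\{(a_i,b_i)\}_{0\leqslant i\leqslant k}$ of natural numbers such that $i<j$ implies $a_i<a_j<b_j<b_i$. A partial rainbow on $G$ is a set $S$ of non-identity arrows such that (1) the set $\{(P(K),P(H)) : (K,H)\in S\}$ is a rainbow, and (2) for any $g\in G$ and $(K,H)\in S$, if $(gKg^{-1},gHg^{-1})\neq(K,H)$ then $(gKg^{-1},gHg^{-1})\notin S$. *)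

From mathcomp Require Import all_boot all_fingroup.
Set Implicit Arguments. Unset Strict Implicit. Unset Printing Implicit Defensive.
Local Open Scope group_scope.

(* An arrow (K, H) of subgroups of gT (components: a.1 = K, a.2 = H). *)
Notation arrow gT := ({group gT} * {group gT})%type.

Definition is_arrow (gT : finGroupType) (G : {group gT}) (a : arrow gT) : bool :=
  (a.1 \subset a.2) && (a.2 \subset G).

Definition conj_arrow (gT : finGroupType) (a : arrow gT) (g : gT) : arrow gT :=
  ((a.1 :^ g)%G, (a.2 :^ g)%G).

Definition transfer_system (gT : finGroupType) (G : {group gT})
    (T : {set arrow gT}) : bool :=
  [&& [forall a in T, is_arrow G a],
      [forall H : {group gT}, (H \subset G) ==> ((H, H) \in T)],
      [forall a in T, forall b in T, (a.2 == b.1) ==> ((a.1, b.2) \in T)],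
      [forall a in T, forall g in G, conj_arrow a g \in T] &
      [forall a in T, forall L : {group gT},
          (L \subset a.2) ==> (((a.1 :&: L)%G, L) \in T)]].

Definition gen_ts (gT : finGroupType) (G : {group gT}) (S : {set arrow gT})
    : {set arrow gT} :=
  [set a | [forall T : {set arrow gT},
              (transfer_system G T && (S \subset T)) ==> (a \in T)]].

Definition minimal_generating_set (gT : finGroupType) (G : {group gT})
    (S T : {set arrow gT}) : Prop :=
  [/\ forall a, a \in S -> is_arrow G a /\ a.1 != a.2,
      gen_ts G S = T &
      forall s, s \in S -> gen_ts G (S :\ s) != T].

Definition Pexp (gT : finGroupType) (K : {set gT}) : nat :=
  \sum_(p <- primes #|K|) logn p #|K|.

Definition rainbow (R : nat * nat -> Prop) : Prop :=
  exists s : seq (nat * nat),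
    [/\ 0 < size s,
        forall p, R p <-> p \in s &
        forall i j, i < j < size s ->
          let: (ai, bi) := nth (0, 0) s i in
          let: (aj, bj) := nth (0, 0) s j in
          [/\ ai < aj, aj < bj & bj < bi]].

Definition partial_rainbow (gT : finGroupType) (G : {group gT})
    (S : {set arrow gT}) : Prop :=
  [/\ forall a, a \in S -> is_arrow G a /\ a.1 != a.2,
      rainbow (fun p => exists2 a, a \in S & p = (Pexp a.1, Pexp a.2)) &
      forall g a, g \in G -> a \in S -> conj_arrow a g != a ->
        conj_arrow a g \notin S].

From mathcomp Require Import all_boot all_fingroup.
Set Implicit Arguments. Unset Strict Implicit. Unset Printing Implicit Defensive.
Local Open Scope group_scope.

(* If [s] were generated by the other arrows of [S], then [s = (K, H)] would
   be a composite of restrictions of conjugates of those arrows, and its last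
   step would restrict a conjugate [(X, Y)] of some [x] in [S] with [K <= X]
   and [H <= Y].  Then [P] is at least as large on both ends of [x] as on
   those of [s]; in a rainbow this forces equal values of [P], hence
   [(X, Y) = (K, H)], so [s] is a conjugate of another element of [S],
   which a partial rainbow forbids. *)

Lemma homo_connect (T : finType) (e : rel T) (f : T -> T) :
  {homo f : x y / e x y} -> {homo f : x y / connect e x y}.
Proof.
move=> fe x _ /connectP[p xp ->]; apply/connectP.
by exists (map f p); [exact: (homo_path (e' := e) fe xp) | rewrite last_map].
Qed.

Lemma connect_subrel_preorder (T : finType) (e r : rel T) :
  reflexive r -> transitive r -> subrel e r -> subrel (connect e) r.
Proof.
move=> r_refl r_trans er x _ /connectP[p xp ->].
elim: p x xp => [|y p IHp] x //=.
by case/andP=> /er xy /IHp; apply: r_trans.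
Qed.

Lemma connect_lastP (T : finType) (e : rel T) x y :
  connect e x y -> x = y \/ exists2 z, connect e x z & e z y.
Proof.
case/connectP=> p; case/lastP: p => [|p z] /=; first by left.
rewrite rcons_path last_rcons => /andP[xp pz] ->; right.
by exists (last x p) => //; apply/connectP; exists p.
Qed.

Definition bigomega (n : nat) : nat := \sum_(p <- primes n) logn p n.

Lemma bigomega_seq (r : seq nat) n :
  uniq r -> {subset primes n <= r} -> \sum_(p <- r) logn p n = bigomega n.
Proof.
move=> r_uniq sub_nr; rewrite (bigID (mem (primes n))) /=.
rewrite [X in _ + X]big1 ?addn0 => [|p]; last first.
  by rewrite -logn_gt0 lt0n negbK => /eqP.
rewrite -big_filter; apply: perm_big; apply: uniq_perm.
- exact: filter_uniq.
- exact: primes_uniq.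
by move=> p; rewrite mem_filter andb_idr //; apply: sub_nr.
Qed.

Lemma bigomegaM m n : 0 < m -> 0 < n ->
  bigomega (m * n) = bigomega m + bigomega n.
Proof.
move=> m_gt0 n_gt0; rewrite /bigomega.
under eq_bigr do rewrite lognM //; rewrite big_split /=.
by congr (_ + _); apply: bigomega_seq (primes_uniq _) _ => p;
  rewrite primesM // => ->; rewrite ?orbT.
Qed.

Lemma bigomega_eq0 n : (bigomega n == 0) = (n < 2).
Proof.
rewrite /bigomega sum_nat_seq_eq0 -primes_eq0.
case def_n: (primes n) => [|p r] //=.
have : 0 < logn p n by rewrite logn_gt0 def_n mem_head.
by rewrite lt0n => /negbTE->.
Qed.

Section SubgroupLength.
Variable gT : finGroupType.

Lemma PexpJ (A : {set gT}) g : Pexp (A :^ g) = Pexp A.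
Proof. by rewrite /Pexp cardJg. Qed.

Lemma Pexp_indexg (H K : {group gT}) :
  H \subset K -> Pexp K = Pexp H + bigomega #|K : H|.
Proof.
move=> sHK; rewrite -bigomegaM ?cardG_gt0 ?indexg_gt0 //.
by rewrite (Lagrange sHK).
Qed.

Lemma Pexp_subset (H K : {group gT}) : H \subset K -> Pexp H <= Pexp K.
Proof. by move/Pexp_indexg->; rewrite leq_addr. Qed.

Lemma Pexp_subset_eq (H K : {group gT}) :
  H \subset K -> Pexp K <= Pexp H -> H :=: K.
Proof.
move=> sHK; rewrite (Pexp_indexg sHK) -[X in _ <= X]addn0 leq_add2l leqn0.
rewrite bigomega_eq0 ltnS => le_index_1; apply: index1g => //.
by apply/eqP; rewrite eqn_leq le_index_1 indexg_gt0.
Qed.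

End SubgroupLength.

Lemma rainbow_le_eq (R : nat * nat -> Prop) p q :
  rainbow R -> R p -> R q -> p.1 <= q.1 -> p.2 <= q.2 -> p = q.
Proof.
case: p q => a b [c d] [s [_ memR nested]] /memR ps /memR qs /= le_ac le_bd.
have [ip jq] := (nth_index (0, 0) ps, nth_index (0, 0) qs).
set i := index (a, b) s in ip *; set j := index (c, d) s in jq *.
have [i_lt j_lt] : i < size s /\ j < size s by rewrite !index_mem.
case: (ltngtP i j) => [lt_ij|lt_ji|eq_ij]; last by rewrite -ip eq_ij jq.
- have := nested i j; rewrite lt_ij j_lt ip jq => /(_ isT) [_ _].
  by rewrite ltnNge le_bd.
- have := nested j i; rewrite lt_ji i_lt ip jq => /(_ isT) [].
  by rewrite ltnNge le_ac.
Qed.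

Section GeneratedTransferSystem.
Variables (gT : finGroupType) (G : {group gT}) (S : {set arrow gT}).

Lemma mem_gen_ts : S \subset gen_ts G S.
Proof.
apply/subsetP=> a aS; rewrite inE; apply/forallP=> T.
by apply/implyP=> /andP[_ /subsetP]; apply.
Qed.

Lemma gen_ts_min T : transfer_system G T -> S \subset T -> gen_ts G S \subset T.
Proof.
move=> tsT sST; apply/subsetP=> a; rewrite inE => /forallP/(_ T).
by rewrite tsT sST.
Qed.

Definition conj_res_step : rel {group gT} := fun A B =>
  [exists x in S, exists g in G,
     (B \subset x.2 :^ g) && (A == x.1 :^ g :&: B :> {set gT})].

Definition res_chains : {set arrow gT} :=
  [set a : arrow gT | (a.2 \subset G) && connect conj_res_step a.1 a.2].

Lemma conj_res_chain_sub A B : connect conj_res_step A B -> A \subset B.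
Proof.
apply: (@connect_subrel_preorder _ _ [rel A B : {group gT} | A \subset B]).
- exact: subxx.
- by move=> ? ? ?; apply: subset_trans.
move=> {}A {}B /existsP[x /andP[_ /existsP[g /and3P[_ _ /eqP defA]]]].
by rewrite /= defA subsetIr.
Qed.

Lemma conj_res_stepJ g : g \in G ->
  {homo (fun A : {group gT} => (A :^ g)%G) : A B / conj_res_step A B}.
Proof.
move=> gG A B /existsP[x /andP[xS /existsP[h /and3P[hG sBx /eqP defA]]]].
apply/existsP; exists x; rewrite xS; apply/existsP; exists (h * g).
by rewrite groupM //= !conjsgM conjSg sBx defA conjIg eqxx.
Qed.

Lemma conj_res_stepI (L : {group gT}) :
  {homo (fun A : {group gT} => (A :&: L)%G) : A B / conj_res_step A B}.
Proof.
move=> A B /existsP[x /andP[xS /existsP[g /and3P[gG sBx /eqP defA]]]].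
apply/existsP; exists x; rewrite xS; apply/existsP; exists g.
by rewrite gG /= (subset_trans (subsetIl _ _) sBx) defA setIA eqxx.
Qed.

Lemma res_chains_transfer_system : transfer_system G res_chains.
Proof.
apply/and5P; split.
- apply/forallP=> a; apply/implyP; rewrite inE => /andP[a2G chain_a].
  by rewrite /is_arrow a2G andbT conj_res_chain_sub.
- by apply/forallP=> H; apply/implyP=> sHG; rewrite inE sHG connect0.
- apply/forallP=> a; apply/implyP; rewrite inE => /andP[_ chain_a].
  apply/forallP=> b; apply/implyP; rewrite inE => /andP[b2G chain_b].
  apply/implyP=> /eqP a2b1; rewrite inE b2G /=.
  by apply: connect_trans chain_a _; rewrite a2b1.
- apply/forallP=> a; apply/implyP; rewrite inE => /andP[a2G chain_a].
  apply/forallP=> g; apply/implyP=> gG; rewrite inE /=.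
  rewrite -(conjGid gG) conjSg a2G.
  exact: homo_connect (conj_res_stepJ gG) _ _ chain_a.
- apply/forallP=> a; apply/implyP; rewrite inE => /andP[a2G chain_a].
  apply/forallP=> L; apply/implyP=> sLa2; rewrite inE (subset_trans sLa2) //=.
  have /= := homo_connect (conj_res_stepI L) chain_a.
  by congr (connect _ _); apply: val_inj; apply/setIidPr.
Qed.

Lemma sub_res_chains : {in S, forall a, is_arrow G a} -> S \subset res_chains.
Proof.
move=> arrS; apply/subsetP=> a aS; have /andP[sa a2G] := arrS a aS.
rewrite inE a2G; apply: connect1; apply/existsP; exists a; rewrite aS.
apply/existsP; exists 1; rewrite group1 !conjsg1 subxx eq_sym /=.
exact/eqP/setIidPl.
Qed.

Lemma gen_ts_sub_res_chains :
  {in S, forall a, is_arrow G a} -> gen_ts G S \subset res_chains.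
Proof.
move=> arrS.
exact: gen_ts_min res_chains_transfer_system (sub_res_chains arrS).
Qed.

End GeneratedTransferSystem.

Section PartialRainbow.
Variables (gT : finGroupType) (G : {group gT}) (S : {set arrow gT}).
Hypothesis rbS : partial_rainbow G S.

Lemma partial_rainbow_conj_cover s x g : s \in S -> x \in S -> g \in G ->
  s.1 \subset x.1 :^ g -> s.2 \subset x.2 :^ g -> x = s.
Proof.
case: rbS => _ rb conjS sS xS gG sub1 sub2.
have PexpJ_le (y z : {group gT}) : z \subset y :^ g -> Pexp z <= Pexp y.
  by move=> szy; rewrite -(PexpJ y g) (Pexp_subset (K := (y :^ g)%G)).
have [eP1 eP2] : Pexp s.1 = Pexp x.1 /\ Pexp s.2 = Pexp x.2.
  apply/pair_equal_spec/(rainbow_le_eq rb); first by exists s.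
  - by exists x.
  - exact: PexpJ_le sub1.
  - exact: PexpJ_le sub2.
have conjE (y z : {group gT}) :
    z \subset y :^ g -> Pexp y <= Pexp z -> (y :^ g)%G = z.
  move=> szy le_yz; apply/val_inj/esym/(Pexp_subset_eq szy).
  by rewrite /= PexpJ.
have xg_s : conj_arrow x g = s.
  rewrite /conj_arrow (conjE _ _ sub1) ?eP1 // (conjE _ _ sub2) ?eP2 //.
  by rewrite -surjective_pairing.
have [xg_x|] := eqVneq (conj_arrow x g) x; first by rewrite -xg_x.
by move/(conjS g x gG xS); rewrite xg_s sS.
Qed.

Lemma partial_rainbow_no_res_step s (A : {group gT}) :
  s \in S -> s.1 \subset A -> ~~ conj_res_step G (S :\ s) A s.2.
Proof.
move=> sS sA; apply/existsP=> -[x /andP[/setD1P[xs xS] /existsP[g]]].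
case/and3P=> gG sub2 /eqP defA.
have sub1 : s.1 \subset x.1 :^ g.
  by apply: subset_trans (subsetIl _ s.2); rewrite -defA.
by move: xs; rewrite (partial_rainbow_conj_cover sS xS gG sub1 sub2) eqxx.
Qed.

End PartialRainbow.

Theorem proposition3p3 (gT : finGroupType) (G : {group gT})
    (S : {set ({group gT} * {group gT})}) :
  partial_rainbow G S -> minimal_generating_set G S (gen_ts G S).
Proof.
move=> rbS; have [arrS _ _] := rbS; split=> // s sS; apply/eqP=> gen_eq.
have arrSs : {in S :\ s, forall a, is_arrow G a}.
  by move=> a /setD1P[_ /arrS[]].
have : s \in res_chains G (S :\ s).
  apply: (subsetP (gen_ts_sub_res_chains arrSs)).
  by rewrite gen_eq (subsetP (mem_gen_ts _ _)).
rewrite inE => /andP[_ /connect_lastP[s12|[A chain_sA step_As2]]].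
  by have [_] := arrS s sS; rewrite s12 eqxx.
by have := partial_rainbow_no_res_step rbS sS (conj_res_chain_sub chain_sA);
  rewrite step_As2.
Qed.
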